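(* Let $C>0$, $h>0$ and let $\hat q:\mathbb{R}\to\mathbb{R}$ be any function. Suppose real sequences $(v_{C,k})$, $(i_{C,k})$, $(v_{M,k})$, $(i_{M,k})$, $(\varphi_{M,k})$, $k=0,1,2,\dots$, satisfy for all $k$: $$i_{C,k}=C\frac{v_{C,k+1}-v_{C,k}}{h},\quad i_{M,k}=\frac{\hat q(\varphi_{M,k+1})-\hat q(\varphi_{M,k})}{h},\quad \varphi_{M,k+1}=\varphi_{M,k}+hv_{M,k},$$ $$i_{C,k}+i_{M,k}=0,\qquad v_{C,k}=v_{M,k}.$$ Then: 1) $(v_{C,k},\varphi_{M,k})$ is an orbit of the two-dimensional map $$v_{C,k+1}=v_{C,k}-\tfrac{1}{C}\big(\hat q(\varphi_{M,k}+hv_{C,k})-\hat q(\varphi_{M,k})\big),\qquad \varphi_{M,k+1}=\varphi_{M,k}+hv_{C,k}.$$ 2) For any step size $h>0$, the function $\Theta_{MC}(v_C,\varphi_M)=Cv_C+\hat q(\varphi_M)$ is a first integral of this map, i.e. $\Theta_{MC}(v_{C,k+1},\varphi_{M,k+1})=\Theta_{MC}(v_{C,k},\varphi_{M,k})$ for all $k\ge 0$ along every orbit. 3) Consequently $\mathbb{R}^2$ is foliated into the invariant sets $\mathcal{M}_{MC}(Q_0)=\{(v_C,\varphi_M)\in\mathbb{R}^2: Cv_C+\hat q(\varphi_M)=Q_0\}$, $Q_0\in\mathbb{R}$, and along any orbit of the map lying in $\mathcal{M}_{MC}(Q_0)$ the variable $\varphi_{M,k}$ obeys the one-dimensional map $$\varphi_{M,k+1}=\varphi_{M,k}-\frac{h}{C}\hat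 q(\varphi_{M,k})+\frac{h}{C}Q_0.$$
   Context: These equations model a discrete-time circuit of a linear capacitor (capacitance $C$, voltage $v_C$, current $i_C$) connected to an ideal flux-controlled memristor with constitutive relation $q_M=\hat q(\varphi_M)$ (voltage $v_M$, current $i_M$, flux $\varphi_M$), discretized with step size $h$; the last two equations are Kirchhoff's current and voltage laws. *)

From Stdlib Require Import Reals.
Open Scope R_scope.

Definition mc_map (C h : R) (qhat : R -> R) (p : R * R) : R * R :=
  let (v, phi) := p in
  (v - / C * (qhat (phi + h * v) - qhat phi), phi + h * v).

Definition is_orbit (C h : R) (qhat : R -> R) (x : nat -> R * R) : Prop :=
  forall k, x (S k) = mc_map C h qhat (x k).

Definition Theta_MC (C : R) (qhat : R -> R) (p : R * R) : R :=
  C * fst p + qhat (snd p).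

Definition M_MC (C : R) (qhat : R -> R) (Q0 : R) (p : R * R) : Prop :=
  Theta_MC C qhat p = Q0.

(* The discrete capacitor and memristor currents are difference quotients of
   the charges [C v_C] and [qhat phi_M]; Kirchhoff's current law says these
   charge increments cancel, so the total charge [Theta_MC = C v_C + qhat phi_M]
   is conserved exactly, whatever the step size.  On a level set
   [Theta_MC = Q0] the voltage is [v_C = (Q0 - qhat phi_M) / C], and
   substituting it into the flux update gives the one-dimensional map. *)
From Stdlib Require Import Reals Lra.
Open Scope R_scope.

Section MemristorCapacitorMap.

Variables (C : R) (qhat : R -> R).
Hypothesis C_neq0 : C <> 0.

Lemma Theta_MC_mc_map (h : R) (p : R * R) :
  Theta_MC C qhat (mc_map C h qhat p) = Theta_MC C qhat p.
Proof.
  destruct p as [v phi]; unfold Theta_MC, mc_map; simpl.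
  field; exact C_neq0.
Qed.

Lemma Theta_MC_orbit_step (h : R) (x : nat -> R * R) :
  is_orbit C h qhat x -> forall k, Theta_MC C qhat (x (S k)) = Theta_MC C qhat (x k).
Proof.
  intros Hx k; rewrite Hx; apply Theta_MC_mc_map.
Qed.

Lemma M_MC_exists_unique (p : R * R) : exists! Q0 : R, M_MC C qhat Q0 p.
Proof.
  exists (Theta_MC C qhat p); split; [reflexivity | intros Q0 HQ0; exact HQ0].
Qed.

Lemma M_MC_mc_map (h Q0 : R) (p : R * R) :
  M_MC C qhat Q0 p -> M_MC C qhat Q0 (mc_map C h qhat p).
Proof.
  unfold M_MC; rewrite Theta_MC_mc_map; trivial.
Qed.

Lemma snd_mc_map_on_M_MC (h Q0 : R) (p : R * R) :
  M_MC C qhat Q0 p ->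
  snd (mc_map C h qhat p) = snd p - h / C * qhat (snd p) + h / C * Q0.
Proof.
  destruct p as [v phi]; unfold M_MC, Theta_MC, mc_map; simpl; intros <-.
  field; exact C_neq0.
Qed.

Lemma orbit_on_M_MC_reduced (h Q0 : R) (x : nat -> R * R) :
  is_orbit C h qhat x -> (forall k, M_MC C qhat Q0 (x k)) ->
  forall k, snd (x (S k)) = snd (x k) - h / C * qhat (snd (x k)) + h / C * Q0.
Proof.
  intros Hx HM k; rewrite Hx; apply snd_mc_map_on_M_MC, HM.
Qed.

Section Circuit.

Variables (h : R) (vC iC vM iM phiM : nat -> R).
Hypothesis h_neq0 : h <> 0.
Hypothesis Hcap : forall k, iC k = C * (vC (S k) - vC k) / h.
Hypothesis Hmem : forall k, iM k = (qhat (phiM (S k)) - qhat (phiM k)) / h.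
Hypothesis Hflux : forall k, phiM (S k) = phiM k + h * vM k.
Hypothesis HKCL : forall k, iC k + iM k = 0.
Hypothesis HKVL : forall k, vC k = vM k.

Lemma circuit_charge_balance (k : nat) :
  C * (vC (S k) - vC k) + (qhat (phiM (S k)) - qhat (phiM k)) = 0.
Proof.
  pose proof (HKCL k) as Hk; rewrite Hcap, Hmem in Hk.
  apply (Rmult_eq_reg_r (/ h)); [| now apply Rinv_neq_0_compat].
  unfold Rdiv in Hk; lra.
Qed.

Lemma circuit_is_orbit : is_orbit C h qhat (fun k => (vC k, phiM k)).
Proof.
  intro k; unfold mc_map.
  assert (Hphi : phiM (S k) = phiM k + h * vC k) by (rewrite HKVL; apply Hflux).
  rewrite <- Hphi; f_equal.
  pose proof (circuit_charge_balance k).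
  apply (Rmult_eq_reg_l C); [| exact C_neq0].
  field_simplify; [lra | exact C_neq0].
Qed.

End Circuit.

End MemristorCapacitorMap.

Theorem proposition1 (C h : R) (qhat : R -> R) (HC : 0 < C) (Hh : 0 < h)
  (vC iC vM iM phiM : nat -> R)
  (Hcap : forall k, iC k = C * (vC (S k) - vC k) / h)
  (Hmem : forall k, iM k = (qhat (phiM (S k)) - qhat (phiM k)) / h)
  (Hflux : forall k, phiM (S k) = phiM k + h * vM k)
  (HKCL : forall k, iC k + iM k = 0)
  (HKVL : forall k, vC k = vM k) :
  (* 1) the circuit solution is an orbit of the 2-D map *)
  is_orbit C h qhat (fun k => (vC k, phiM k)) /\
  (* 2) Theta_MC is a first integral, for every step size h' > 0 *)
  (forall h' : R, 0 < h' -> forall x : nat -> R * R, is_orbit C h' qhat x ->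
     forall k, Theta_MC C qhat (x (S k)) = Theta_MC C qhat (x k)) /\
  (* 3a) the sets M_MC(Q0) foliate R^2: every point lies in exactly one *)
  (forall p : R * R, exists! Q0 : R, M_MC C qhat Q0 p) /\
  (* 3b) each M_MC(Q0) is invariant under the map *)
  (forall (Q0 : R) (p : R * R), M_MC C qhat Q0 p ->
     M_MC C qhat Q0 (mc_map C h qhat p)) /\
  (* 3c) along an orbit lying in M_MC(Q0), phi obeys the reduced 1-D map *)
  (forall (Q0 : R) (x : nat -> R * R), is_orbit C h qhat x ->
     (forall k, M_MC C qhat Q0 (x k)) ->
     forall k, snd (x (S k)) = snd (x k) - h / C * qhat (snd (x k)) + h / C * Q0).
Proof.
  assert (HC0 : C <> 0) by lra.
  assert (Hh0 : h <> 0) by lra.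
  split; [| split; [| split; [| split]]].
  - exact (circuit_is_orbit C qhat HC0 h vC iC vM iM phiM Hh0 Hcap Hmem Hflux HKCL HKVL).
  - intros h' _; exact (Theta_MC_orbit_step C qhat HC0 h').
  - exact (M_MC_exists_unique C qhat).
  - exact (M_MC_mc_map C qhat HC0 h).
  - exact (orbit_on_M_MC_reduced C qhat HC0 h).
Qed.
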